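(* Let $n=p'pq$ where $p',p,q$ are distinct odd primes, let $A=L(n;p')$, and let $n'=n/p$. Then $U(n')\subseteq f(A)$, where $f:\mathbb{Z}_n\to\mathbb{Z}_{n'}$ is the natural map.
   Context: $U(m)$ is the unit group of $\mathbb{Z}_m$. For odd $m=\prod p_i^{r_i}$, prime $p\mid m$ and $a\in U(m)$, $\left(\frac{a}{p}\right)$ is the Legendre symbol of the image of $a$ mod $p$ and $\left(\frac{a}{m}\right)=\prod\left(\frac{a}{p_i}\right)^{r_i}$; $L(m;p')=\{a\in U(m):\left(\frac{a}{m}\right)=\left(\frac{a}{p'}\right)\}$ for a prime $p'\mid m$. The natural map $\mathbb{Z}_n\to\mathbb{Z}_{n'}$ is $a+n\mathbb{Z}\mapsto a+n'\mathbb{Z}$. *)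

From mathcomp Require Import all_boot all_order all_algebra.
Set Implicit Arguments. Unset Strict Implicit. Unset Printing Implicit Defensive.
Import GRing.Theory Num.Theory.
Local Open Scope ring_scope.

Definition legendre (p a : nat) : int :=
  if (p %| a)%N then 0
  else if [exists x : 'I_p, (x ^ 2 == a %[mod p])%N] then 1 else -1.

Definition jacobi (m a : nat) : int :=
  \prod_(p <- primes m) legendre p a ^+ logn p m.

Definition U (m : nat) : {set 'I_m} := [set a : 'I_m | coprime a m].

Definition L (m p' : nat) : {set 'I_m} :=
  [set a in U m | jacobi m a == legendre p' a].

From mathcomp Require Import all_boot all_order all_algebra.
From mathcomp Require Import zify.
Import GRing.Theory Num.Theory.

Set Implicit Arguments.
Unset Strict Implicit.

(* By the Chinese remainder theorem, a lift a of b in U(p'q) can be given any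
   residue modulo p.  Since (a/n) = (a/p')(a/p)(a/q), choosing (a/p) = (b/q)
   makes (a/p)(a/q) = (b/q)^2 = 1, i.e. a is in L(n;p'); such a residue exists
   because the odd prime p has a quadratic nonresidue. *)

Lemma legendre_mod p a : legendre p (a %% p) = legendre p a.
Proof. by rewrite /legendre /dvdn !modn_mod. Qed.

Lemma eq_legendre_mod p a b : a = b %[mod p] -> legendre p a = legendre p b.
Proof. by move=> eq_ab; rewrite -legendre_mod eq_ab legendre_mod. Qed.

Lemma legendre_eq0 p a : (legendre p a == 0)%R = (p %| a)%N.
Proof. by rewrite /legendre; case: (p %| a)%N; last case: existsP. Qed.

Lemma legendre_sqr p a : ~~ (p %| a)%N -> (legendre p a ^+ 2 = 1)%R.
Proof. by rewrite /legendre => /negbTE ->; case: existsP. Qed.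

Lemma legendre1 p : prime p -> legendre p 1 = 1%R.
Proof.
move=> p_pr; rewrite /legendre dvdn1 (gtn_eqF (prime_gt1 p_pr)).
by case: existsP => // -[]; exists (Ordinal (prime_gt1 p_pr)); rewrite /= exp1n.
Qed.

(* Squaring is not injective on Z_p (1 and p - 1 collide), so it is not onto
   either, and a nonzero non-square exists. *)
Lemma exists_nonresidue p : prime p -> odd p -> exists r, legendre p r = (-1)%R.
Proof.
move=> p_pr p_odd; have p_gt0 := prime_gt0 p_pr.
case: (pickP [pred r : 'I_p | legendre p r == (-1)%R]) => [r /eqP|no_nonres].
  by exists r.
pose sq (x : 'I_p) : 'I_p := Ordinal (ltn_pmod (x ^ 2) p_gt0).
have sq_onto y : y \in codom sq.
  apply/codomP; move: (no_nonres y); rewrite /= /legendre.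
  have [y0|y_gt0] := posnP y.
    by move=> _; exists (Ordinal p_gt0); apply/val_inj; rewrite /= y0 mod0n.
  rewrite gtnNdvd //; case: existsP => // -[x /eqP sq_x] _.
  by exists x; apply/val_inj; rewrite /= sq_x modn_small.
have /image_injP sq_inj : #|codom sq| == #|'I_p|.
  by rewrite (eq_card (B := predT)) ?card_ord.
have p_gt2 : (2 < p)%N.
  by rewrite ltn_neqAle prime_gt1 // andbT; apply: contraTneq p_odd => <-.
have sqr_pred : (p.-1 ^ 2 = (p - 2) * p + 1)%N.
  by rewrite -subn1; nia.
have lt1p : (1 < p)%N by apply: ltnW.
have ltpp : (p.-1 < p)%N by rewrite prednK.
have sq_1_pred : sq (Ordinal lt1p) = sq (Ordinal ltpp).
  by apply/val_inj; rewrite /= sqr_pred modnMDl exp1n.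
by have /(congr1 val) /= := sq_inj _ _ isT isT sq_1_pred; lia.
Qed.

Lemma exists_legendre_eq p (s : int) : prime p -> odd p -> (s ^+ 2 = 1)%R ->
  exists c, legendre p c = s.
Proof.
move=> p_pr p_odd /eqP; rewrite sqrf_eq1 => /orP[]/eqP->.
  by exists 1%N; rewrite legendre1.
exact: exists_nonresidue.
Qed.

Lemma primes_prod3 p1 p2 p3 : prime p1 -> prime p2 -> prime p3 ->
  p1 != p2 -> p1 != p3 -> p2 != p3 ->
  perm_eq (primes (p1 * p2 * p3)) [:: p1; p2; p3].
Proof.
move=> p1_pr p2_pr p3_pr p12 p13 p23.
apply: uniq_perm; [exact: primes_uniq | by rewrite /= !inE negb_or p12 p13 p23 |].
move=> r; rewrite mem_primes !muln_gt0 !prime_gt0 //= !inE.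
apply/andP/idP => [[r_pr]|].
  by rewrite !Euclid_dvdM // !dvdn_prime2 // -orbA.
case/or3P => /eqP->; split=> //.
- exact/dvdn_mulr/dvdn_mulr.
- exact/dvdn_mulr/dvdn_mull.
- exact: dvdn_mull.
Qed.

Lemma jacobi_prime3 p1 p2 p3 a : prime p1 -> prime p2 -> prime p3 ->
  p1 != p2 -> p1 != p3 -> p2 != p3 ->
  jacobi (p1 * p2 * p3) a = (legendre p1 a * legendre p2 a * legendre p3 a)%R.
Proof.
move=> p1_pr p2_pr p3_pr p12 p13 p23.
rewrite /jacobi (perm_big _ (primes_prod3 p1_pr p2_pr p3_pr p12 p13 p23)) /=.
rewrite !big_cons big_nil !lognM ?muln_gt0 ?prime_gt0 // !logn_prime //.
by rewrite !eqxx !(eq_sym p2) !(eq_sym p3) (negbTE p12) (negbTE p13) (negbTE p23) mulr1 mulrA.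
Qed.

Lemma eqmodn_dvd d m x y : (d %| m)%N -> x = y %[mod m] -> x = y %[mod d].
Proof. by move=> dvd_dm eq_xy; rewrite -(modn_dvdm x dvd_dm) eq_xy modn_dvdm. Qed.

Lemma exists_L_eqmod p' p q b : prime p' -> prime p -> prime q -> odd p ->
  p' != p -> p' != q -> p != q -> coprime b (p' * q) ->
  exists2 a : 'I_(p' * p * q), a \in L (p' * p * q) p' & a = b %[mod p' * q].
Proof.
move=> p'_pr p_pr q_pr p_odd p'p p'q pq b_unit.
have q_ndvd_b : ~~ (q %| b)%N.
  by rewrite -prime_coprime // coprime_sym; move: b_unit; rewrite coprimeMr => /andP[].
have [c Lc] := exists_legendre_eq p_pr p_odd (legendre_sqr q_ndvd_b).
have c_unit : coprime c p.
  by rewrite coprime_sym prime_coprime // -legendre_eq0 Lc legendre_eq0.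
have p'q_p : coprime (p' * q) p.
  by rewrite coprimeMl !prime_coprime // !dvdn_prime2 // p'p eq_sym pq.
have n_gt0 : (0 < p' * p * q)%N by rewrite !muln_gt0 !prime_gt0.
pose x := chinese (p' * q) p b c.
have x_b : x = b %[mod p' * q] := chinese_modl p'q_p b c.
have x_c : x = c %[mod p] := chinese_modr p'q_p b c.
pose a := Ordinal (ltn_pmod x n_gt0).
have a_x : a = x %[mod p' * p * q] by rewrite /= modn_mod.
have a_b : a = b %[mod p' * q].
  by rewrite (eqmodn_dvd _ a_x) ?x_b // mulnAC dvdn_mulr.
have a_c : a = c %[mod p].
  by rewrite (eqmodn_dvd _ a_x) ?x_c // dvdn_mulr ?dvdn_mull.
exists a => //; rewrite !inE; apply/andP; split.
  rewrite -coprime_modl a_x coprime_modl mulnAC coprimeMr.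
  by rewrite -coprime_modl x_b coprime_modl b_unit -coprime_modl x_c coprime_modl.
rewrite jacobi_prime3 // (eq_legendre_mod a_c) Lc.
rewrite (eq_legendre_mod (eqmodn_dvd (dvdn_mull _ (dvdnn q)) a_b)).
rewrite (eq_legendre_mod (eqmodn_dvd (dvdn_mulr _ (dvdnn p')) a_b)).
by rewrite -mulrA -expr2 legendre_sqr // mulr1.
Qed.

Theorem lemma5p2 (p' p q : nat) :
  prime p' -> prime p -> prime q -> odd p' -> odd p -> odd q ->
  p' != p -> p' != q -> p != q ->
  forall b : 'I_(p' * p * q %/ p),
    b \in U (p' * p * q %/ p) ->
    exists2 a : 'I_(p' * p * q), a \in L (p' * p * q) p' &
      (a %% (p' * p * q %/ p))%N = b.
Proof.
move=> p'_pr p_pr q_pr _ p_odd _ p'p p'q pq.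
have -> : (p' * p * q %/ p = p' * q)%N by rewrite mulnAC mulnK ?prime_gt0.
move=> b; rewrite inE => b_unit.
have [a a_L a_b] := exists_L_eqmod p'_pr p_pr q_pr p_odd p'p p'q pq b_unit.
by exists a; rewrite // a_b modn_small.
Qed.
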